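(* Let $G$ be a connected graph with $12$ vertices. Suppose one of the following holds: (1) $\Delta(G)=11$ and $e(G)=12+k$ for some $1\le k\le 8$; (2) $\Delta(G)=10$ and $e(G)=12+k$ for some $4\le k\le 8$; (3) $\Delta(G)=9$ and $e(G)=12+k$ for some $7\le k\le 8$. Then $R(G)>\sqrt{11}+\frac{2(k+1)}{12\sqrt{11}}$.
   Context: All graphs are finite and simple; $e(G)$ is the number of edges and $\Delta(G)$ the maximum degree. For a vertex $u$, $d(u)$ is its degree. The Randić index is $R(G)=\sum_{\{u,v\}\in E(G)} \frac{1}{\sqrt{d(u)d(v)}}$. *)

From HB Require Import structures.
From mathcomp Require Import all_boot all_order all_algebra.
Set Implicit Arguments. Unset Strict Implicit. Unset Printing Implicit Defensive.
Import Order.TTheory GRing.Theory Num.Theory.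

Definition simple_graph (T : finType) (adj : rel T) : Prop :=
  symmetric adj /\ irreflexive adj.

Definition connected_graph (T : finType) (adj : rel T) : Prop :=
  forall x y : T, connect adj x y.

Definition deg (T : finType) (adj : rel T) (u : T) : nat := #|[set v | adj u v]|.

Definition max_deg (T : finType) (adj : rel T) : nat := (\max_(u : T) deg adj u)%N.

Definition num_edges (T : finType) (adj : rel T) : nat :=
  #|[set p : T * T | adj p.1 p.2 && (enum_rank p.1 < enum_rank p.2)%N]|.

Local Open Scope ring_scope.

Definition randic (R : rcfType) (T : finType) (adj : rel T) : R :=
  \sum_(p : T * T | adj p.1 p.2 && (enum_rank p.1 < enum_rank p.2)%N)
     (Num.sqrt ((deg adj p.1)%:R * (deg adj p.2)%:R))^-1.

From HB Require Import structures.
From Stdlib Require Import NArith.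
From mathcomp Require Import all_boot all_order all_algebra.
From mathcomp Require Import ring lra zify.
Import Order.TTheory GRing.Theory Num.Theory.
Set Implicit Arguments. Unset Strict Implicit. Unset Printing Implicit Defensive.
Local Open Scope ring_scope.

(* Let w have maximum degree D and put s = sqrt D.  For a neighbour v of w,
   1/sqrt(D d(v)) = 1/s - (d(v) - 1) c(d(v))/s with c(a) = 1/(a + sqrt a), so
   charging c(d(v))/s to each other edge at v, the edges at w contribute exactly
   s and R(G) = s + the sum, over the edges uv of G - w, of 1/sqrt(d(u) d(v))
   minus the charges on uv.  As d(u) + d(v) + D <= e(G) + 3, only finitely many
   degree pairs occur; tabulated rational bounds, checked by computation, show
   that each of these e(G) - D terms is at least some mu, and
   sqrt D + mu (e(G) - D) exceeds the target. *)

Section DartSums.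
Variables (R : pzSemiRingType) (T : finType) (adj : rel T).
Hypotheses (adj_sym : symmetric adj) (adj_irr : irreflexive adj).

Definition dart_sum (F : T -> T -> R) := \sum_u \sum_(v | adj u v) F u v.

Lemma edge_sum_dart (F : T -> T -> R) : (forall u v, F u v = F v u) ->
  (\sum_(p : T * T | adj p.1 p.2 && (enum_rank p.1 < enum_rank p.2)%N) F p.1 p.2) *+ 2
  = dart_sum F.
Proof.
move=> FS; rewrite /dart_sum pair_big_dep /= mulr2n.
rewrite [RHS](bigID (fun p : T * T => (enum_rank p.1 < enum_rank p.2)%N)) /=.
congr (_ + _); rewrite (reindex_inj (h := fun p : T * T => (p.2, p.1))); last first.
  by move=> [a b] [c d] /= [-> ->].
apply: eq_big => [[a b]|[a b] _] /=; last exact: FS.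
rewrite adj_sym; case ab: (adj a b) => //=.
have /negbTE rank_ab : (enum_rank b : nat) != enum_rank a.
  by apply: contraTneq ab => /ord_inj/enum_rank_inj->; rewrite adj_irr.
by rewrite -leqNgt ltn_neqAle rank_ab.
Qed.

Lemma natr_deg u : (deg adj u)%:R = \sum_(v | adj u v) (1 : R).
Proof. by rewrite /deg cardsE sumr_const. Qed.

Lemma num_edges_dart : (num_edges adj)%:R *+ 2 = dart_sum (fun _ _ => 1 : R).
Proof. by rewrite -edge_sum_dart // /num_edges cardsE sumr_const. Qed.

Variable w : T.

Definition dart_sum_off (F : T -> T -> R) :=
  \sum_u \sum_v (if [&& u != w, v != w & adj u v] then F u v else 0).

Lemma dart_sum_split F : (forall u v, F u v = F v u) ->
  dart_sum F = (\sum_(v | adj w v) F w v) *+ 2 + dart_sum_off F.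
Proof.
move=> FS; rewrite /dart_sum /dart_sum_off (bigD1 w) //= [X in _ = _ + X](bigD1 w) //=.
rewrite [X in _ = _ + (X + _)]big1 => [|v _]; last by rewrite eqxx.
rewrite add0r mulr2n -addrA; congr (_ + _).
have nbr_split u : u != w -> \sum_(v | adj u v) F u v =
    (if adj u w then F u w else 0)
    + \sum_v (if [&& u != w, v != w & adj u v] then F u v else 0).
  move=> uw; rewrite big_mkcond (bigD1 w) //= [X in _ = _ + X](bigD1 w) //=.
  rewrite eqxx andbF add0r; congr (_ + _).
  by apply: eq_bigr => v vw; rewrite uw vw.
rewrite (eq_bigr _ nbr_split) big_split /=; congr (_ + _).
rewrite -big_mkcondr /=; apply: eq_big => [u|u _]; last exact: FS.
by rewrite adj_sym andb_idl // => wu; apply: contraTneq wu => ->; rewrite adj_irr.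
Qed.

Lemma dart_sum_off_transpose F : dart_sum_off (fun u v => F v u) = dart_sum_off F.
Proof.
rewrite /dart_sum_off exchange_big /=; apply: eq_bigr => u _; apply: eq_bigr => v _.
by rewrite adj_sym andbCA.
Qed.

Lemma dart_sum_off_nbr (c : T -> R) :
  dart_sum_off (fun u _ => if adj w u then c u else 0)
  = \sum_(u | adj w u) c u * (deg adj u).-1%:R.
Proof.
rewrite /dart_sum_off [RHS]big_mkcond; apply: eq_bigr => u _.
case: ifP => wu; last by rewrite big1 // => v _; case: ifP.
have uw : u != w by apply: contraTneq wu => ->; rewrite adj_irr.
have uw' : adj u w by rewrite adj_sym.
have -> : (deg adj u).-1 = #|[set v | (v != w) && adj u v]|.
  rewrite /deg (cardsD1 w) inE uw' /=; apply: eq_card => v.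
  by rewrite !inE andbC.
rewrite mulr_natr -sumr_const [RHS]big_mkcond /=; apply: eq_bigr => v _.
by rewrite inE uw.
Qed.

End DartSums.

Section OrderedDartSums.
Variables (R : numDomainType) (T : finType) (adj : rel T) (w : T).

Lemma dart_sum_offB (F G : T -> T -> R) :
  dart_sum_off adj w (fun u v => F u v - G u v)
  = dart_sum_off adj w F - dart_sum_off adj w G.
Proof.
rewrite /dart_sum_off -sumrB; apply: eq_bigr => u _; rewrite -sumrB.
by apply: eq_bigr => v _; case: ifP; rewrite ?subr0.
Qed.

Lemma dart_sum_off_ge (mu : R) G :
  (forall u v, u != w -> v != w -> adj u v -> mu <= G u v) ->
  mu * dart_sum_off adj w (fun _ _ => 1) <= dart_sum_off adj w G.
Proof.
move=> G_ge; rewrite /dart_sum_off mulr_sumr; apply: ler_sum => u _.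
rewrite mulr_sumr; apply: ler_sum => v _.
by case: ifP => [/and3P[uw vw uv]|_]; rewrite ?mulr1 ?mulr0 ?G_ge.
Qed.

End OrderedDartSums.

Section DegreeCounting.
Variables (T : finType) (adj : rel T).
Hypotheses (adj_sym : symmetric adj) (adj_irr : irreflexive adj).

Lemma deg_sum_adj x : deg adj x = (\sum_y adj x y)%N.
Proof.
rewrite /deg cardsE -sum1_card big_mkcond /=.
by apply: eq_bigr => y _; rewrite unfold_in; case: (adj x y).
Qed.

Lemma handshake : (\sum_u deg adj u = num_edges adj * 2)%N.
Proof.
have -> : (num_edges adj * 2 = (num_edges adj)%:R *+ 2)%N by rewrite natn -mulr_natr.
rewrite (num_edges_dart nat adj_sym adj_irr); apply: eq_bigr => u _.
by rewrite -(natr_deg nat) natn.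
Qed.

(* Each y in {u, v, w} has at most two neighbours in {u, v, w}, and the edges
   from {u, v, w} to the rest are counted in the degrees outside. *)
Lemma deg_triple u v w : u != v -> u != w -> v != w ->
  (deg adj u + deg adj v + deg adj w <= num_edges adj + 3)%N.
Proof.
move=> uv uw vw; set P := [:: u; v; w].
have sumP (f : T -> nat) : (\sum_(x in P) f x = f u + f v + f w)%N.
  rewrite -big_uniq; first by rewrite !big_cons big_nil /= addn0 addnA.
  by rewrite /= !inE negb_or uv uw vw.
pose out y := (\sum_(x | x \notin P) adj y x)%N.
have deg_in y : y \in P -> (deg adj y <= out y + 2)%N.
  move=> Py; rewrite deg_sum_adj (bigID (fun x => x \in P)) /= sumP addnC leq_add2l.
  by move: Py; rewrite !inE => /or3P[]/eqP->; rewrite adj_irr;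
    case: (adj _ _); case: (adj _ _).
have out_le : (\sum_(y in P) out y <= \sum_(x | x \notin P) deg adj x)%N.
  rewrite /out exchange_big /=; apply: leq_sum => x _.
  rewrite deg_sum_adj [X in (_ <= X)%N](bigID (fun x => x \in P)) /=.
  apply: leq_trans (leq_addr _ _); apply: eq_leq; apply: eq_bigr => y _.
  by rewrite adj_sym.
have deg_P : (deg adj u + deg adj v + deg adj w <= \sum_(y in P) out y + 6)%N.
  by rewrite -sumP (leq_trans (leq_sum _ deg_in)) // big_split /= (sumP (fun=> 2%N)).
have split_deg : (deg adj u + deg adj v + deg adj w
                  + \sum_(x | x \notin P) deg adj x = num_edges adj * 2)%N.
  by rewrite -handshake [RHS](bigID (fun x => x \in P)) sumP.
lia.
Qed.

End DegreeCounting.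

Section StarBound.
Variable R : rcfType.

Definition edge_charge (a : nat) : R := (a%:R + Num.sqrt a%:R)^-1.

Lemma edge_charge_ge0 a : 0 <= edge_charge a.
Proof. by rewrite invr_ge0 addr_ge0 ?sqrtr_ge0. Qed.

Lemma inv_sqrtM_split (D a : nat) : (0 < a)%N ->
  (Num.sqrt (D%:R * a%:R))^-1
  = (Num.sqrt D%:R)^-1 - a.-1%:R * (edge_charge a / Num.sqrt (D%:R : R)).
Proof.
move=> a_gt0; rewrite sqrtrM ?ler0n // /edge_charge.
have x_gt0 : 0 < Num.sqrt (a%:R : R) by rewrite sqrtr_gt0 ltr0n.
have -> : a.-1%:R = Num.sqrt (a%:R : R) ^+ 2 - 1 :> R.
  by rewrite sqr_sqrtr ?ler0n // -subn1 natrB.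
rewrite -[X in (X + _)^-1]sqr_sqrtr ?ler0n //.
move: (Num.sqrt (a%:R : R)) x_gt0 (Num.sqrt (D%:R : R)) => x x_gt0 s.
have [->|s_neq0] := eqVneq s 0; first by rewrite !(mul0r, invr0, mulr0, subr0).
have xx_neq0 : x ^+ 2 + x != 0 by rewrite lt0r_neq0 // addr_gt0 ?exprn_gt0.
by field; rewrite s_neq0 xx_neq0 gt_eqF.
Qed.

Lemma star_edge_sum (T : finType) (adj : rel T) (w : T) : symmetric adj ->
  \sum_(v | adj w v) (Num.sqrt ((deg adj w)%:R * (deg adj v)%:R))^-1
  = Num.sqrt (deg adj w)%:R
    - \sum_(v | adj w v) edge_charge (deg adj v) / Num.sqrt (deg adj w)%:R
                         * (deg adj v).-1%:R.
Proof.
move=> adj_sym; set s := Num.sqrt _.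
have deg_gt0 v : adj w v -> (0 < deg adj v)%N.
  by move=> wv; apply/card_gt0P; exists w; rewrite inE adj_sym.
rewrite (eq_bigr _ (fun v wv => inv_sqrtM_split (deg adj w) (deg_gt0 v wv))).
rewrite sumrB; congr (_ - _); last by apply: eq_bigr => v _; rewrite mulrC.
under eq_bigr do rewrite -[_^-1]mul1r.
have s2 : s ^+ 2 = (deg adj w)%:R by rewrite sqr_sqrtr ?ler0n.
rewrite -mulr_suml -natr_deg -/s -s2.
by have [->|s_neq0] := eqVneq s 0; rewrite ?invr0 ?mulr0 // expr2 mulfK.
Qed.

Lemma randic_ge_star (T : finType) (adj : rel T) (w : T) (mu : R) :
  symmetric adj -> irreflexive adj ->
  (forall u v, u != w -> v != w -> adj u v ->
     mu <= (Num.sqrt ((deg adj u)%:R * (deg adj v)%:R))^-1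
           - (edge_charge (deg adj u) + edge_charge (deg adj v))
             / Num.sqrt (deg adj w)%:R) ->
  Num.sqrt (deg adj w)%:R + mu * ((num_edges adj)%:R - (deg adj w)%:R)
    <= randic R adj.
Proof.
move=> adj_sym adj_irr; set d := deg adj; set s := Num.sqrt (d w)%:R => edge_ge.
pose r u v := (Num.sqrt ((d u)%:R * (d v)%:R : R))^-1.
pose c u (_ : T) := if adj w u then edge_charge (d u) / s else 0.
have r_sym u v : r u v = r v u by rewrite /r mulrC.
have randic2 : randic R adj *+ 2 = (s - dart_sum_off adj w c) *+ 2 + dart_sum_off adj w r.
  rewrite dart_sum_off_nbr // -star_edge_sum // -dart_sum_split //.
  by rewrite -(edge_sum_dart adj_sym adj_irr r_sym).
have off_darts : dart_sum_off adj w (fun _ _ => 1 : R)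
                 = ((num_edges adj)%:R - (d w)%:R) *+ 2.
  have := num_edges_dart R adj_sym adj_irr.
  rewrite (dart_sum_split adj_sym adj_irr w) // -natr_deg -/d => E.
  by rewrite mulrnBl E addrAC subrr add0r.
have c_le x y : c x y <= edge_charge (d x) / s.
  by rewrite /c; case: ifP; rewrite ?divr_ge0 ?edge_charge_ge0 ?sqrtr_ge0.
have off_ge : mu * dart_sum_off adj w (fun _ _ => 1 : R)
              <= dart_sum_off adj w (fun u v => r u v - c u v - c v u).
  apply: dart_sum_off_ge => u v uw vw uv; apply: le_trans (edge_ge u v uw vw uv) _.
  have := c_le u v; have := c_le v u; rewrite /r mulrDl; lra.
rewrite !dart_sum_offB (dart_sum_off_transpose adj_sym w c) off_darts mulrnAr in off_ge.
lra.
Qed.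

End StarBound.

Arguments edge_charge {R} a.

Section SqrtBounds.
Variable R : rcfType.

Lemma le_inv_sqrt (a : nat) (q : R) : (0 < a)%N -> 0 <= q ->
  q ^+ 2 * a%:R <= 1 -> q <= (Num.sqrt a%:R)^-1.
Proof.
move=> a_gt0 q_ge0; have x_gt0 : 0 < Num.sqrt (a%:R : R) by rewrite sqrtr_gt0 ltr0n.
move: (sqr_sqrtr (ler0n R a)) x_gt0; move: (Num.sqrt _) => x <- x_gt0 qx.
by rewrite -div1r ler_pdivlMr //; nra.
Qed.

Lemma inv_sqrt_le (a : nat) (q : R) : (0 < a)%N -> 0 <= q ->
  1 <= q ^+ 2 * a%:R -> (Num.sqrt a%:R)^-1 <= q.
Proof.
move=> a_gt0 q_ge0; have x_gt0 : 0 < Num.sqrt (a%:R : R) by rewrite sqrtr_gt0 ltr0n.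
move: (sqr_sqrtr (ler0n R a)) x_gt0; move: (Num.sqrt _) => x <- x_gt0 qx.
have qx_ge0 : 0 <= q * x by rewrite mulr_ge0 // ltW.
by rewrite -div1r ler_pdivrMr //; nra.
Qed.

Lemma le_sqrt (a : nat) (l : R) : 0 <= l -> l ^+ 2 <= a%:R -> l <= Num.sqrt a%:R.
Proof. by move=> l_ge0 l2a; rewrite -(ger0_norm l_ge0) -sqrtr_sqr ler_wsqrtr. Qed.

Lemma sqrt_le (a : nat) (l : R) : 0 <= l -> a%:R <= l ^+ 2 -> Num.sqrt a%:R <= l.
Proof. by move=> l_ge0 al2; rewrite -(ger0_norm l_ge0) -sqrtr_sqr ler_wsqrtr. Qed.

(* From q <= 1/sqrt a we get a q <= sqrt a, hence a + sqrt a >= a (1 + q). *)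
Lemma edge_charge_le (a : nat) (q l : R) : (0 < a)%N -> 0 <= q ->
  q <= (Num.sqrt a%:R)^-1 -> 1 <= l * a%:R * (1 + q) -> edge_charge a <= l.
Proof.
move=> a_gt0 q_ge0; have x_gt0 : 0 < Num.sqrt (a%:R : R) by rewrite sqrtr_gt0 ltr0n.
rewrite /edge_charge.
move: (sqr_sqrtr (ler0n R a)) x_gt0; move: (Num.sqrt _) => x <- x_gt0 qx lx.
rewrite -div1r ler_pdivrMr ?addr_gt0 ?exprn_gt0 //.
rewrite -div1r ler_pdivlMr // in qx.
have l_gt0 : 0 < l.
  move: lx; rewrite -mulrA => /(lt_le_trans ltr01).
  by rewrite pmulr_lgt0 // mulr_gt0 ?exprn_gt0 ?ltr_pwDl.
have qx' : 0 <= 1 - q * x by rewrite subr_ge0.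
have := mulr_ge0 (mulr_ge0 (ltW l_gt0) (ltW x_gt0)) qx'; nra.
Qed.

End SqrtBounds.

(* The numerical certificates below are decided by computation on binary
   numbers; all quantities are in thousandths. *)

Lemma leq_of_Nleb (m n : nat) : (N.of_nat m <=? N.of_nat n)%num -> (m <= n)%N.
Proof. by move/N.leb_le => mn; lia. Qed.

(* floor (1000 / sqrt a) *)
Definition inv_sqrt_milli (a : nat) : nat :=
  match a with
  | 1 => 1000 | 2 => 707 | 3 => 577 | 4 => 500 | 5 => 447 | 6 => 408 | 7 => 377
  | 8 => 353 | 9 => 333 | 10 => 316 | 11 => 301 | 12 => 288 | 13 => 277 | _ => 0
  end.

(* ceil (1000 * edge_charge a) *)
Definition charge_milli (a : nat) : nat :=
  match a with
  | 1 => 500 | 2 => 293 | 3 => 212 | 4 => 167 | 5 => 139 | 6 => 119 | 7 => 104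
  | 8 => 93 | 9 => 84 | 10 => 76 | 11 => 70 | 12 => 65 | 13 => 61 | _ => 0
  end.

Definition deg_cert (a : nat) : bool :=
  let q := N.of_nat (inv_sqrt_milli a) in let l := N.of_nat (charge_milli a) in
  let n := N.of_nat a in let k := N.of_nat 1000 in
  (q * q * n <=? k * k)%num && (k * k <=? l * n * (k + q))%num.

Definition pair_cert (M I B : nat) : bool :=
  all (fun a => all (fun b => (a + b <= B)%N ==>
    [&& deg_cert a, deg_cert b &
        (N.of_nat M * N.of_nat 1000
         + (N.of_nat (charge_milli a) + N.of_nat (charge_milli b)) * N.of_nat I
         <=? N.of_nat (inv_sqrt_milli a) * N.of_nat (inv_sqrt_milli b))%num])
    (iota 1 B)) (iota 1 B).

Definition sqrt_cert (D I L : nat) : bool :=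
  let k := N.of_nat 1000 in
  (N.of_nat L * N.of_nat L <=? N.of_nat D * k * k)%num
  && (k * k <=? N.of_nat I * N.of_nat I * N.of_nat D)%num.

Section Certificates.
Variable R : rcfType.
Local Notation milli n := (n%:R / 1000 : R).

Lemma deg_cert_sound a : (0 < a)%N -> deg_cert a ->
  milli (inv_sqrt_milli a) <= (Num.sqrt a%:R)^-1
  /\ edge_charge a <= milli (charge_milli a).
Proof.
move=> a_gt0 /andP[]; rewrite -!(Nat2N.inj_mul, Nat2N.inj_add) !multE plusE.
move=> /leq_of_Nleb; rewrite -(ler_nat R) !natrM => q_le.
move=> /leq_of_Nleb; rewrite -(ler_nat R) !natrM natrD => l_ge.
have q_ge0 : 0 <= milli (inv_sqrt_milli a) by rewrite divr_ge0 ?ler0n.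
have q_le' := le_inv_sqrt a_gt0 q_ge0 (ltac:(rewrite expr2; lra)).
split=> //; apply: edge_charge_le q_ge0 q_le' _ => //; lra.
Qed.

Lemma pair_cert_sound (M I B a b : nat) : pair_cert M I B ->
  (0 < a)%N -> (0 < b)%N -> (a + b <= B)%N ->
  milli M <= (Num.sqrt (a%:R * b%:R))^-1 - (edge_charge a + edge_charge b) * milli I.
Proof.
move=> cert a_gt0 b_gt0 ab_le.
have /allP/(_ b) := allP cert a (ltac:(rewrite mem_iota; lia)).
move=> /(_ (ltac:(rewrite mem_iota; lia))) /implyP/(_ ab_le) /and3P[cert_a cert_b].
rewrite -!(Nat2N.inj_mul, Nat2N.inj_add) !multE plusE.
move=> /leq_of_Nleb; rewrite -(ler_nat R) !(natrD, natrM) => pair_le.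
have [qa ca] := deg_cert_sound a_gt0 cert_a.
have [qb cb] := deg_cert_sound b_gt0 cert_b.
have qq := ler_pM (divr_ge0 (ler0n _ _) (ler0n _ _)) (divr_ge0 (ler0n _ _) (ler0n _ _)) qa qb.
have cc := ler_wpM2r (divr_ge0 (ler0n R I) (ler0n R 1000)) (lerD ca cb).
rewrite sqrtrM ?ler0n // invfM; apply: le_trans (lerB qq cc); lra.
Qed.

Lemma sqrt_cert_sound (D I L : nat) : sqrt_cert D I L ->
  (Num.sqrt D%:R)^-1 <= milli I /\ milli L <= Num.sqrt D%:R.
Proof.
rewrite /sqrt_cert -!Nat2N.inj_mul !multE => /andP[/leq_of_Nleb L_le /leq_of_Nleb I_ge].
have D_gt0 : (0 < D)%N by case: D L_le I_ge => // _; rewrite muln0 leqn0 muln_eq0.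
move: L_le I_ge; rewrite -!(ler_nat R) !natrM => L_le I_ge.
split; [apply: inv_sqrt_le | apply: le_sqrt];
  rewrite ?divr_ge0 ?ler0n // expr2; lra.
Qed.

End Certificates.

Lemma randic_ge_cert (R : rcfType) (T : finType) (adj : rel T) (w : T) (M I B : nat) :
  symmetric adj -> irreflexive adj ->
  (num_edges adj + 3 <= deg adj w + B)%N -> pair_cert M I B ->
  (Num.sqrt (deg adj w)%:R)^-1 <= I%:R / 1000 :> R ->
  Num.sqrt (deg adj w)%:R + M%:R / 1000 * ((num_edges adj)%:R - (deg adj w)%:R)
    <= randic R adj.
Proof.
move=> adj_sym adj_irr edges_le cert inv_sqrt_w.
apply: randic_ge_star => // u v uw vw uv.
have deg_gt0 x y : adj x y -> (0 < deg adj x)%N.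
  by move=> xy; apply/card_gt0P; exists y; rewrite inE.
have u_neq_v : u != v by apply: contraTneq uv => ->; rewrite adj_irr.
have deg_uv : (deg adj u + deg adj v <= B)%N.
  by have := deg_triple adj_sym adj_irr u_neq_v uw vw; lia.
have vu : adj v u by rewrite adj_sym.
have := pair_cert_sound R cert (deg_gt0 u v uv) (deg_gt0 v u vu) deg_uv.
have charges_ge0 : 0 <= edge_charge (deg adj u) + edge_charge (deg adj v) :> R.
  by rewrite addr_ge0 ?edge_charge_ge0.
have := ler_wpM2l charges_ge0 inv_sqrt_w; lra.
Qed.

(* 3317/1000 >= sqrt 11 and 503/10000 >= 2 / (12 sqrt 11). *)
Lemma target_le_approx (R : rcfType) (k : nat) :
  Num.sqrt (11%:R : R) + (2 * (k.+1)%:R) / (12%:R * Num.sqrt 11%:R)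
    <= 3317 / 1000 + (k.+1)%:R * (503 / 10000).
Proof.
have s_le : Num.sqrt (11%:R : R) <= 3317 / 1000 by apply: sqrt_le; rewrite ?expr2; lra.
have si_le : (Num.sqrt (11%:R : R))^-1 <= 3018 / 10000.
  by apply: inv_sqrt_le => //; rewrite ?expr2; lra.
have K_ge0 : 0 <= 2 * (k.+1)%:R / 12%:R :> R by rewrite divr_ge0 ?mulr_ge0.
rewrite invfM; have := ler_wpM2l K_ge0 si_le; lra.
Qed.

Lemma target_lt_randic_cert (R : rcfType) (T : finType) (adj : rel T) (w : T)
    (k D M I B L : nat) :
  symmetric adj -> irreflexive adj -> deg adj w = D -> num_edges adj = (12 + k)%N ->
  (k + 15 <= D + B)%N -> pair_cert M I B -> sqrt_cert D I L ->
  3317 / 1000 + (k.+1)%:R * (503 / 10000)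
    < L%:R / 1000 + M%:R / 1000 * ((12 + k)%:R - D%:R) :> R ->
  Num.sqrt (11%:R : R) + (2 * (k.+1)%:R) / (12%:R * Num.sqrt 11%:R) < randic R adj.
Proof.
move=> adj_sym adj_irr deg_w m_eq k_le cert /(sqrt_cert_sound R)[inv_sqrt_D L_le] gap.
have edges_le : (num_edges adj + 3 <= deg adj w + B)%N.
  by rewrite m_eq deg_w addnAC addnC.
have := randic_ge_cert (R := R) adj_sym adj_irr edges_le cert.
rewrite deg_w m_eq => /(_ inv_sqrt_D).
have := target_le_approx R k; lra.
Qed.

Lemma max_deg_attained (T : finType) (adj : rel T) :
  (0 < #|T|)%N -> exists w, deg adj w = max_deg adj.
Proof. by move=> T_gt0; have [w max_w] := bigop.eq_bigmax (deg adj) T_gt0; exists w. Qed.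

Theorem lemma3p8 (R : rcfType) (adj : rel 'I_12) (k : nat) :
  simple_graph adj -> connected_graph adj ->
  [\/ (max_deg adj = 11)%N /\ (1 <= k <= 8)%N,
      (max_deg adj = 10)%N /\ (4 <= k <= 8)%N
    | (max_deg adj = 9)%N /\ (7 <= k <= 8)%N] ->
  num_edges adj = (12 + k)%N ->
  Num.sqrt (11%:R : R) + (2 * (k.+1)%:R) / (12%:R * Num.sqrt 11%:R)
    < randic R adj.
Proof.
move=> [adj_sym adj_irr] _ cases m_eq.
have [w deg_w] := max_deg_attained adj (ltac:(by rewrite card_ord)).
have case_gt := target_lt_randic_cert (R := R) adj_sym adj_irr deg_w m_eq.
have kS : (k.+1)%:R = k%:R + 1 :> R by rewrite -addn1 natrD.
case: cases => [][D_eq /andP[k_ge k_le]]; rewrite {}D_eq in case_gt.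
- apply: (case_gt 60%N 302%N 12%N 3316%N); [| by vm_compute | by vm_compute |].
  + by move: k_le; rewrite -(leq_add2r 15).
  + by move: k_ge k_le; rewrite -!(ler_nat R) natrD kS; lra.
- apply: (case_gt 70%N 317%N 13%N 3162%N); [| by vm_compute | by vm_compute |].
  + by move: k_le; rewrite -(leq_add2r 15).
  + by move: k_ge k_le; rewrite -!(ler_nat R) natrD kS; lra.
- have [] : k = 7%N \/ k = 8%N by clear -k_ge k_le; lia.
  all: move=> k_eq; subst k.
  + apply: (case_gt 75%N 334%N 13%N 3000%N); [by [] | by vm_compute | by vm_compute | lra].
  + apply: (case_gt 71%N 334%N 14%N 3000%N); [by [] | by vm_compute | by vm_compute | lra].
Qed.
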